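(* Let $\mathbb{F}$ be a free group on a finite basis $X$, $\pi:\mathbb{F}\twoheadrightarrow\Gamma$ an epimorphism, and suppose $\Gamma$ is stable with respect to $\pi$ and $\ker\pi$ is nontrivial. Then there exist $C_1,C_2>0$ such that for all $x\ge C_1$: (i) if $\delta>0$ is such that there exists a finite $E\subseteq\ker\pi$ for which every $(\delta,E)$-almost-solution is $x^{-1}$-close to a solution for $\ker\pi$, then $\delta\le C_2x^{-1}$; (ii) $F_\Gamma^\pi(x)\ge x/4$.
   Context: For a finite set $\Omega$, $d_\Omega(\sigma,\tau)=|\{\omega:\sigma(\omega)\ne\tau(\omega)\}|/|\Omega|$. For $E\subseteq\mathbb{F}$, a homomorphism $\phi:\mathbb{F}\to\mathrm{Sym}(\Omega)$ ($\Omega$ finite) is a solution for $E$ if $E\subseteq\ker\phi$, and a $(\delta,E)$-almost-solution if $d_\Omega(\phi(r),\mathrm{id}_\Omega)<\delta$ for all $r\in E$. Homomorphisms $\rho,\phi:\mathbb{F}\to\mathrm{Sym}(\Omega)$ are $\epsilon$-close if $d_\Omega(\rho(x),\phi(x))<\epsilon$ for all $x\in X$. $\Gamma$ is stable w.r.t. $\pi$ if for every $\epsilon>0$ there exist $\delta\in(0,1]$ and finite $E\subseteq\ker\pi$ (a valid pair for $\epsilon$) such that every $(\delta,E)$-almost-solution is $\epsilon$-close to a solution for $\ker\pi$. With $\|E\|=\sum_{r\in E}|r|$ (word length in $X$), $F_\Gamma^\pi(x)=\inf\{\|E\|/\delta\}$ over valid pairs for $\epsilon=1/x$. *)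

From HB Require Import structures.
From mathcomp Require Import all_boot all_order all_algebra all_fingroup.
From mathcomp Require Import all_classical all_reals ereal.
Set Implicit Arguments. Unset Strict Implicit. Unset Printing Implicit Defensive.
Import Order.TTheory GRing.Theory Num.Theory.

(* A letter is a basis element together with an exponent flag:
   (i, false) = x_i,  (i, true) = x_i^{-1}. *)
Definition letter (k : nat) := ('I_k * bool)%type.
Definition word (k : nat) := seq (letter k).

Definition linv k (l : letter k) : letter k := (l.1, ~~ l.2).

Fixpoint reduce k (w : word k) : word k :=
  match w with
  | [::] => [::]
  | l :: w' =>
      match reduce w' with
      | [::] => [:: l]
      | l' :: w'' => if l' == linv l then w'' else l :: l' :: w''
      end
  end.

(* elements of F are the reduced words *)
Definition reduced k (w : word k) : bool := reduce w == w.

Definition fmul k (u v : word k) : word k := reduce (u ++ v).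

Definition wlen k (w : word k) : nat := size w.

Record Grp := {
  gcar :> Type;
  gmul : gcar -> gcar -> gcar;
  gone : gcar;
  ginv : gcar -> gcar;
  gmulA : forall a b c, gmul a (gmul b c) = gmul (gmul a b) c;
  gmul1 : forall a, gmul gone a = a;
  gmulV : forall a, gmul (ginv a) a = gone }.

(* pi : F ->> Gamma is an epimorphism (only its values on reduced words matter) *)
Definition epimorphism k (G : Grp) (pi : word k -> G) : Prop :=
  (forall u v, reduced u -> reduced v -> pi (fmul u v) = gmul (pi u) (pi v)) /\
  (forall g : G, exists2 w, reduced w & pi w = g).

Definition inker k (G : Grp) (pi : word k -> G) (w : word k) : Prop :=
  reduced w /\ pi w = gone G.

(* By the universal property of F, a homomorphism F -> Sym(Omega) is the same
   as an assignment s : X -> Sym(Omega); hom s w is its value on w. *)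
Definition lperm k (O : finType) (s : 'I_k -> {perm O}) (l : letter k) : {perm O} :=
  if l.2 then (s l.1)^-1%g else s l.1.

Definition hom k (O : finType) (s : 'I_k -> {perm O}) (w : word k) : {perm O} :=
  foldr (fun l acc => (lperm s l * acc)%g) 1%g w.

Section Metric.
Variable R : realType.
Local Open Scope ring_scope.

Definition dist (O : finType) (a b : {perm O}) : R :=
  #|[set o | a o != b o]|%:R / #|O|%:R.

Definition is_solution k (G : Grp) (pi : word k -> G) (O : finType)
  (s : 'I_k -> {perm O}) : Prop :=
  forall r, inker pi r -> hom s r = 1%g.

Definition almost_solution k (O : finType) (delta : R) (E : seq (word k))
  (s : 'I_k -> {perm O}) : Prop :=
  forall r, r \in E -> dist (hom s r) 1%g < delta.

Definition eps_close k (O : finType) (eps : R) (s t : 'I_k -> {perm O}) : Prop :=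
  forall i : 'I_k, dist (s i) (t i) < eps.

Definition good_pair k (G : Grp) (pi : word k -> G) (eps delta : R)
  (E : seq (word k)) : Prop :=
  uniq E /\ (forall r, r \in E -> inker pi r) /\
  forall (O : finType) (s : 'I_k -> {perm O}),
    almost_solution delta E s ->
    exists t : 'I_k -> {perm O}, is_solution pi t /\ eps_close eps s t.

Definition valid_pair k (G : Grp) (pi : word k -> G) (eps delta : R)
  (E : seq (word k)) : Prop :=
  0 < delta <= 1 /\ good_pair pi eps delta E.

Definition stable k (G : Grp) (pi : word k -> G) : Prop :=
  forall eps : R, 0 < eps -> exists delta E, valid_pair pi eps delta E.

Definition normE k (E : seq (word k)) : nat := \sum_(r <- E) wlen r.

(* F_Gamma^pi(x) = inf { ||E|| / delta : (delta, E) valid pair for eps = 1/x } *)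
Definition stab_fun k (G : Grp) (pi : word k -> G) (x : R) : \bar R :=
  ereal_inf [set y : \bar R | exists (delta : R) (E : seq (word k)),
     valid_pair pi x^-1 delta E /\ y = ((normE E)%:R / delta)%:E]%classic.
End Metric.

From Pilot Require Import Defs.
From mathcomp Require Import all_boot all_order all_algebra all_fingroup.
From mathcomp Require Import all_classical all_reals ereal.
From mathcomp Require Import zify ring lra.
Import Order.TTheory GRing.Theory Num.Theory.

(** Let [w] be a shortest nontrivial element of [ker pi], of length [L].
  Walking along a path [0 -> 1 -> ... -> L] whose [j]-th edge is labelled by
  the [j]-th letter of [w] gives, for each generator, a partial injection of
  the [L+1] vertices (this is where reducedness of [w] is used); completed to
  permutations, these define an action in which [w] moves [0] to [L].
  Pad this action with fixed points up to [n = floor x] points.  Every word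
  then moves at most [L+1] of the [n] points, and an action on at most [x]
  points that is [1/x]-close to a solution is a solution.  So if a pair
  [(delta, E)] works for [1/x], then [delta <= (L+1)/n <= 2(L+1)/x], and some
  [r] in [E] acts nontrivially, whence [||E|| >= |r| >= L] and
  [||E||/delta >= x/4]. *)

Set Implicit Arguments. Unset Strict Implicit. Unset Printing Implicit Defensive.

(* Unqualified, [hom] would resolve to the linear maps of mathcomp's vector.v. *)
Local Notation hom := Defs.hom.

Lemma size_reduce k (w : word k) : size (reduce w) <= size w.
Proof.
elim: w => [|l w IH] //=.
case: (reduce w) IH => [|l' w'] /= IH; first by [].
by case: ifP => _ /=; lia.
Qed.

Lemma reduced_sorted k (w : word k) :
  reduced w -> sorted (fun l l' => l' != linv l) w.
Proof.
rewrite /reduced; elim: w => [|l w IH] //=.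
have := size_reduce w.
case Ew: (reduce w) => [|l' w'] /=; first by move=> _ /eqP [<-].
case: ifP => [_ size_le /eqP w'E | not_inv _ /eqP [wE]].
  by move: size_le; rewrite w'E /=; lia.
by rewrite -wE /= not_inv /=; move: IH; rewrite Ew -wE eqxx; apply.
Qed.

Lemma hom_trajectory k (O : finType) (s : 'I_k -> {perm O}) (l0 : letter k)
    (w : word k) (p : nat -> O) :
  (forall j, j < size w -> lperm s (nth l0 w j) (p j) = p j.+1) ->
  hom s w (p 0) = p (size w).
Proof.
elim: w p => [|l w IH] p step /=.
  exact: perm1.
rewrite permM (step 0) //; apply: (IH (fun j => p j.+1)) => j j_lt.
exact: (step j.+1).
Qed.

Section PartialInjection.
Variables (T : finType) (f : T -> option T).
Hypothesis f_inj : forall a b c, f a = Some c -> f b = Some c -> a = b.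

Let undef := [set a | f a == None].
Let unhit := [set b | [forall a, f a != Some b]].

Lemma card_unhit : #|unhit| = #|undef|.
Proof.
have hitE : ~: unhit = [set odflt a (f a) | a in ~: undef].
  apply/setP => b; rewrite !inE negb_forall; apply/existsP/imsetP.
    by case=> a; rewrite negbK => /eqP fa; exists a; rewrite ?inE fa.
  by case=> a; rewrite !inE; case fa: (f a) => [c|] //= _ ->; exists a; rewrite fa negbK.
rewrite [LHS]cardsCs [RHS]cardsCs hitE card_in_imset // => a b.
rewrite !inE; case fa: (f a) => [c|] //; case fb: (f b) => [d|] //= _ _ cd.
by apply: f_inj fa _; rewrite fb cd.
Qed.

Definition pinj_ext a :=
  if f a is Some b then b else nth a (enum unhit) (index a (enum undef)).

Lemma pinj_ext_inj : injective pinj_ext.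
Proof.
have idx_lt a : f a = None -> index a (enum undef) < size (enum unhit).
  by move=> fa; rewrite -cardE card_unhit cardE index_mem mem_enum inE fa.
have ext_unhit a : f a = None ->
    nth a (enum unhit) (index a (enum undef)) \in unhit.
  by move=> fa; rewrite -mem_enum mem_nth // idx_lt.
move=> a b; rewrite /pinj_ext.
case fa: (f a) => [c|]; case fb: (f b) => [d|].
- by move=> cd; apply: f_inj fa _; rewrite fb cd.
- by move=> cE; have := ext_unhit b fb; rewrite -cE inE => /forallP/(_ a); rewrite fa eqxx.
- by move=> dE; have := ext_unhit a fa; rewrite dE inE => /forallP/(_ b); rewrite fb eqxx.
move=> E.
have ia := idx_lt a fa; have ib := idx_lt b fb.
have same_idx : index a (enum undef) = index b (enum undef).
  by rewrite -(index_uniq a ia (enum_uniq _)) E (index_uniq b ib (enum_uniq _)).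
have aE : a \in enum undef by rewrite mem_enum inE fa.
have bE : b \in enum undef by rewrite mem_enum inE fb.
by rewrite -(nth_index a aE) same_idx (nth_index a bE).
Qed.

Definition pinj_perm : {perm T} := perm pinj_ext_inj.

Lemma pinj_permE a b : f a = Some b -> pinj_perm a = b.
Proof. by rewrite permE /pinj_ext => ->. Qed.

End PartialInjection.

Section PathAction.
Variables (k : nat) (l0 : letter k) (w : word k).
Hypothesis w_reduced : reduced w.
Local Notation L := (size w).

Lemma no_inverse_pair j : j.+1 < L -> nth l0 w j.+1 != linv (nth l0 w j).
Proof. by move=> jL; apply: (sortedP l0 (reduced_sorted w_reduced)). Qed.

Definition path_step (i : 'I_k) (a : 'I_L.+1) : option 'I_L.+1 :=
  if (a < L) && (nth l0 w a == (i, false)) then Some (inord a.+1)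
  else if (0 < a) && (nth l0 w a.-1 == (i, true)) then Some (inord a.-1)
  else None.

Lemma path_stepP i a c : path_step i a = Some c ->
  (c : nat) = a.+1 /\ nth l0 w a = (i, false) \/
  [/\ (c : nat) = a.-1, 0 < a & nth l0 w a.-1 = (i, true)].
Proof.
have aL := ltn_ord a; rewrite /path_step.
case: ifP => [/andP [a_lt /eqP wa] [<-] | _].
  by left; rewrite inordK.
case: ifP => [/andP [a_gt /eqP wa] [<-] | //].
by right; rewrite inordK //; lia.
Qed.

Lemma path_step_inj i a b c :
  path_step i a = Some c -> path_step i b = Some c -> a = b.
Proof.
have aL := ltn_ord a; have bL := ltn_ord b.
move=> /path_stepP [[ca wa] | [ca a_gt wa]] /path_stepP [[cb wb] | [cb b_gt wb]];
  apply: val_inj => /=; try lia.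
- have a1L : a.+1 < L by lia.
  by have := no_inverse_pair a1L; rewrite (_ : a.+1 = b.-1) ?wa ?wb ?eqxx //; lia.
- have b1L : b.+1 < L by lia.
  by have := no_inverse_pair b1L; rewrite (_ : b.+1 = a.-1) ?wa ?wb ?eqxx //; lia.
Qed.

Definition path_perm i : {perm 'I_L.+1} := pinj_perm (@path_step_inj i).

Lemma lperm_path_perm j :
  j < L -> lperm path_perm (nth l0 w j) (inord j) = inord j.+1.
Proof.
move=> jL; rewrite /lperm; case wj: (nth l0 w j) => [i []] /=.
  have step : path_step i (inord j.+1) = Some (inord j).
    rewrite /path_step inordK //.
    case: ifP => [/andP [jL' /eqP wj1] | _].
      by have := no_inverse_pair jL'; rewrite wj wj1 eqxx.
    by rewrite /= wj eqxx.
  by rewrite -(pinj_permE (@path_step_inj i) step) permK.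
apply: pinj_permE.
by rewrite /path_step inordK ?jL /= ?wj ?eqxx //; lia.
Qed.

Lemma path_perm_nontrivial : 0 < L -> hom path_perm w != 1%g.
Proof.
move=> L_gt0; apply/eqP => hom1.
have := hom_trajectory (p := fun j => inord j : 'I_L.+1) lperm_path_perm.
rewrite hom1 perm1 => /(congr1 (@nat_of_ord _)); rewrite !inordK //; lia.
Qed.

End PathAction.

Lemma reduced_word_acts k (w : word k) : reduced w -> w != [::] ->
  exists sg : 'I_k -> {perm 'I_(size w).+1}, hom sg w != 1%g.
Proof.
case: w => [|l0 w'] // w_red _.
by exists (path_perm l0 w_red); apply: path_perm_nontrivial.
Qed.

Section Padding.
Variables P Q : finType.

Definition pad_fun (p : {perm P}) (o : P + Q) : P + Q :=
  if o is inl a then inl (p a) else o.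

Lemma pad_fun_inj p : injective (pad_fun p).
Proof. by case=> [a|b] [a'|b'] //= [] // /perm_inj ->. Qed.

Definition pad (p : {perm P}) : {perm P + Q} := perm (@pad_fun_inj p).

Lemma pad1 : pad 1 = 1%g.
Proof. by apply/permP => -[a|b]; rewrite permE /= !perm1. Qed.

Lemma padM p q : pad (p * q) = (pad p * pad q)%g.
Proof. by apply/permP => -[a|b]; rewrite permM !permE /= ?permM. Qed.

Lemma padV p : pad p^-1 = (pad p)^-1%g.
Proof. by apply: (mulIg (pad p)); rewrite -padM !mulVg pad1. Qed.

Lemma hom_pad k (s : 'I_k -> {perm P}) r : hom (pad \o s) r = pad (hom s r).
Proof.
elim: r => [|l r IH]; first by rewrite pad1.
by rewrite [LHS]/= -/(hom _ r) IH padM /lperm; case: l.2; rewrite ?padV.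
Qed.

Lemma pad_eq1 p : (pad p == 1%g) = (p == 1%g).
Proof.
apply/eqP/eqP => [pad_p1|->]; last exact: pad1.
apply/permP => a; have := congr1 (fun s : {perm P + Q} => s (inl a)) pad_p1.
by rewrite permE perm1 => -[->]; rewrite perm1.
Qed.

End Padding.

Section ForcedSolutions.
Variable R : realType.
Local Open Scope ring_scope.

Lemma eq_perm_of_dist_lt (O : finType) (a b : {perm O}) (x : R) :
  #|O|%:R <= x -> dist R a b < x^-1 -> a = b.
Proof.
move=> Ox dist_lt; apply/permP => o; apply/eqP; apply: contraTT dist_lt => ab.
have O_gt0 : (0 : R) < #|O|%:R by rewrite ltr0n; apply/card_gt0P; exists o.
have diff_ge1 : 1 <= #|[set o' | a o' != b o']|%:R :> R.
  by rewrite ler1n; apply/card_gt0P; exists o; rewrite inE.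
rewrite -leNgt /dist (@le_trans _ _ #|O|%:R^-1) //.
  by rewrite lef_pV2 ?posrE // (lt_le_trans O_gt0 Ox).
by rewrite ler_pdivlMr // mulVf ?gt_eqF.
Qed.

Lemma dist_pad1 (P Q : finType) (p : {perm P}) :
  dist R (pad Q p) 1%g <= #|P|%:R / (#|P| + #|Q|)%:R.
Proof.
rewrite /dist card_sum ler_wpM2r ?invr_ge0 ?ler0n // ler_nat.
have supp_inl : [set o | pad Q p o != (1%g : {perm P + Q}) o] \subset inl @: [set: P].
  apply/fintype.subsetP => -[a|b]; rewrite inE permE perm1 /= => moved.
    by apply: imset_f; rewrite inE.
  by rewrite eqxx in moved.
by rewrite (leq_trans (subset_leq_card supp_inl)) // card_imset ?cardsT //; move=> ? ? [].
Qed.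

Variables (k : nat) (G : Grp) (pi : word k -> G).

Lemma good_pair_is_solution (O : finType) (s : 'I_k -> {perm O}) (x delta : R) E :
  #|O|%:R <= x -> good_pair pi x^-1 delta E -> almost_solution delta E s ->
  is_solution pi s.
Proof.
move=> Ox [_ [_ good]] /good [t [t_sol st]].
by have -> : s = t by apply: funext => i; apply: eq_perm_of_dist_lt Ox (st i).
Qed.

Section PaddedAction.
Variables (P Q : finType) (sg : 'I_k -> {perm P}) (r0 : word k).
Hypotheses (r0_ker : inker pi r0) (sg_r0 : hom sg r0 != 1%g).
Variables (x delta : R) (E : seq (word k)).
Hypotheses (x_ge : (#|P| + #|Q|)%:R <= x) (good : good_pair pi x^-1 delta E).

Lemma padded_not_almost_solution : ~ almost_solution delta E (pad Q \o sg).
Proof.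
have card_PQ : #|{: P + Q}|%:R <= x by rewrite card_sum.
move=> /(good_pair_is_solution card_PQ good) /(_ r0 r0_ker) /eqP.
by rewrite hom_pad pad_eq1 (negbTE sg_r0).
Qed.

Lemma good_pair_delta_le : delta <= #|P|%:R / (#|P| + #|Q|)%:R.
Proof.
rewrite leNgt; apply/negP => delta_gt; apply: padded_not_almost_solution => r _.
by rewrite hom_pad (le_lt_trans (dist_pad1 _ _)).
Qed.

Lemma good_pair_detects : 0 < delta -> exists2 r, r \in E & hom sg r != 1%g.
Proof.
move=> delta_gt0; apply/hasP; apply: contra_notT padded_not_almost_solution.
move=> /hasPn fixed r /fixed; rewrite negbK => /eqP sg_r.
rewrite /dist hom_pad sg_r pad1.
by rewrite eq_card0 ?mul0r // => o; rewrite !inE eqxx.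
Qed.

End PaddedAction.

Lemma good_pair_bounds (P : finType) (sg : 'I_k -> {perm P}) r0 (x delta : R) E :
  inker pi r0 -> hom sg r0 != 1%g -> #|P|.+1%:R <= x -> 0 < delta ->
  good_pair pi x^-1 delta E ->
  delta <= 2 * #|P|%:R / x /\ exists2 r, r \in E & hom sg r != 1%g.
Proof.
move=> r0_ker sg_r0 x_ge delta_gt0 good.
have x_gt0 : 0 < x by apply: lt_le_trans x_ge; rewrite ltr0n.
pose n := Num.truncn x.
have P_lt_n : (#|P| < n)%N by rewrite truncn_ge_nat // ltW.
have x_lt : x < n.+1%:R := truncnS_gt x.
pose Q : finType := 'I_(n - #|P|).
have card_PQ : (#|P| + #|Q| = n)%N by rewrite card_ord; lia.
have x_ge_PQ : (#|P| + #|Q|)%:R <= x.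
  by rewrite card_PQ truncn_le ltW.
split; last exact: (good_pair_detects (Q := Q) r0_ker sg_r0 x_ge_PQ good delta_gt0).
apply: le_trans (good_pair_delta_le (Q := Q) r0_ker sg_r0 x_ge_PQ good) _.
have n_gt0 : (0 : R) < n%:R by rewrite ltr0n; lia.
have n_ge1 : (1 : R) <= n%:R by rewrite ler1n; lia.
have P_ge0 : (0 : R) <= #|P|%:R := ler0n _ _.
move: x_lt; rewrite -natr1 card_PQ ler_pdivrMr // mulrAC ler_pdivlMr // => x_lt.
nra.
Qed.

End ForcedSolutions.

Lemma shortest_relator_action k (G : Grp) (pi : word k -> G) :
  (exists r, inker pi r /\ r != [::]) ->
  exists (L : nat) (sg : 'I_k -> {perm 'I_L.+1}),
    [/\ (0 < L)%N, exists2 w, inker pi w & hom sg w != 1%g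
      & forall r, inker pi r -> r != [::] -> (L <= size r)%N].
Proof.
move=> [r0 [r0_ker r0_ne]].
pose relator_len n := `[< exists r, inker pi r /\ r != [::] /\ size r = n >].
have [|L /asboolP [w [w_ker [w_ne <-]]] L_min] := ex_minnP (P := relator_len).
  by exists (size r0); apply/asboolP; exists r0.
have [sg sg_w] := reduced_word_acts w_ker.1 w_ne.
exists (size w), sg; split; [by case: w w_ne {w_ker sg sg_w L_min} | by exists w |].
by move=> r r_ker r_ne; apply: L_min; apply/asboolP; exists r.
Qed.

Lemma wlen_le_normE k (E : seq (word k)) r : r \in E -> (wlen r <= normE E)%N.
Proof.
rewrite /normE; elim: E => [|r' E IH] //; rewrite inE big_cons.
by case/orP => [/eqP <-|/IH]; lia.
Qed.

Local Open Scope ring_scope.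

Theorem proposition2p3 (R : realType) (k : nat) (G : Grp) (pi : word k -> G) :
  epimorphism pi ->
  @stable R k G pi ->
  (exists r, inker pi r /\ r != [::]) ->
  exists C1 C2 : R, 0 < C1 /\ 0 < C2 /\
    forall x : R, C1 <= x ->
      (forall delta : R, 0 < delta ->
         (exists E, good_pair pi x^-1 delta E) -> delta <= C2 * x^-1) /\
      ((x / 4)%:E <= stab_fun pi x)%E.
Proof.
move=> _ _ /shortest_relator_action [L [sg [L_gt0 [w w_ker sg_w] L_min]]].
exists L.+2%:R, (2 * L.+1)%:R; split; first by rewrite ltr0n.
split; first by rewrite ltr0n muln_gt0.
move=> x x_ge; have x_gt0 : 0 < x by apply: lt_le_trans x_ge; rewrite ltr0n.
have bounds := good_pair_bounds w_ker sg_w (x := x); rewrite card_ord in bounds.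
split=> [delta delta_gt0 [E good] | ].
  by have [+ _] := bounds delta E x_ge delta_gt0 good; rewrite natrM.
apply/ereal_infP => _ [delta [E [[/andP [delta_gt0 _] good] ->]]].
have [delta_le [r r_E sg_r]] := bounds delta E x_ge delta_gt0 good.
have r_ker : inker pi r by case: good => _ [+ _]; apply.
have r_ne : r != [::] by apply: contra sg_r => /eqP ->.
have L_le : (L <= normE E)%N := leq_trans (L_min r r_ker r_ne) (wlen_le_normE r_E).
move: delta_le; rewrite ler_pdivlMr // -natr1 => delta_x.
have L_ge1 : 1 <= L%:R :> R by rewrite ler1n.
move: L_le; rewrite -(ler_nat R) => L_le.
rewrite lee_fin ler_pdivlMr // mulrAC.
lra.
Qed.
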